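(* For all positive integers $n,m,k$ with $m\ge k$, every $(n,N,k,m)$-PIR array code over $\mathbb{F}_q$ satisfies $N\ge \frac{mn}{m-k+1}$; i.e. $N_P(n,k,m)\ge \frac{mn}{m-k+1}$. Consequently also $N_B(n,k,m)\ge\frac{mn}{m-k+1}$.
   Context: Fix a finite field $\mathbb{F}_q$; $[n]=\{1,\dots,n\}$. An $(n,N,k,m)$-batch array code (BAC) over $\mathbb{F}_q$ is an $\mathbb{F}_q$-linear map $\mathcal{C}:\mathbf x=(x_1,\dots,x_n)\in\mathbb{F}_q^n\mapsto(\mathbf c_1,\dots,\mathbf c_m)$ with buckets $\mathbf c_\ell\in\mathbb{F}_q^{N_\ell}$, $N_\ell\ge1$ independent of $\mathbf x$, $\sum_\ell N_\ell=N$, such that for every multiset $\{\{i_1,\dots,i_k\}\}$ of elements of $[n]$ there is a partition of $[m]$ into $k$ sets $R_1,\dots,R_k$ such that for each $j\in[k]$, $x_{i_j}$ is an $\mathbb{F}_q$-linear combination of values $f_\ell(\mathbf c_\ell)$, $\ell\in R_j$, for some linear functionals $f_\ell:\mathbb{F}_q^{N_\ell}\to\mathbb{F}_q$ (functionals and coefficients independent of $\mathbf x$); $R_j$ is then called a recovery set of $x_{i_j}$. An $(n,N,k,m)$-PIR array code is defined identically except that the requirement is imposed only for multisets of the form $\{\{i,i,\dots,i\}\}$, i.e. every $x_i$ has $k$ pairwise disjoint recovery sets partitioning $[m]$. For $k\le m$, $N_P(n,k,m)$ (resp. $N_B(n,k,m)$) is the minimum $N$ for which an $(n,N,k,m)$-PIR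 array code (resp. BAC) over $\mathbb{F}_q$ exists; clearly $N_B\ge N_P$. *)

From mathcomp Require Import all_boot all_order all_algebra all_field.
Set Implicit Arguments. Unset Strict Implicit. Unset Printing Implicit Defensive.
Import GRing.Theory Num.Theory.
Local Open Scope ring_scope.

(* An array code over a finite field F with m buckets: the encoder of bucket l
   is the F-linear map x |-> x *m G l : F^n -> F^(Ns l), x a row vector. *)

(* R is a recovery set of x_i: there are linear functionals f_l : F^(Ns l) -> F
   (represented by column vectors, f_l(c) = (c *m f l) 0 0) and coefficients a_l,
   independent of x, such that x_i = sum_{l in R} a_l f_l(c_l) for all x. *)
Definition recovery_set (F : finFieldType) (n m : nat) (Ns : 'I_m -> nat)
  (G : forall l : 'I_m, 'M[F]_(n, Ns l)) (i : 'I_n) (R : {set 'I_m}) : Prop :=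
  exists (f : forall l : 'I_m, 'cV[F]_(Ns l)) (a : 'I_m -> F),
    forall x : 'rV[F]_n,
      x 0 i = \sum_(l in R) a l * ((x *m G l) *m f l) 0 0.

Definition valid_sizes (m : nat) (Ns : 'I_m -> nat) : Prop :=
  forall l, (0 < Ns l)%N.

Definition total_size (m : nat) (Ns : 'I_m -> nat) : nat := (\sum_(l < m) Ns l)%N.

(* PIR array code with k recovery sets: for each i, a partition of [m] into k
   sets R_1..R_k (given by the block-assignment map p : [m] -> [k],
   R_j = p^-1(j)), each R_j a recovery set of x_i. *)
Definition is_PIR_array_code (F : finFieldType) (n k m : nat) (Ns : 'I_m -> nat)
  (G : forall l : 'I_m, 'M[F]_(n, Ns l)) : Prop :=
  valid_sizes Ns /\
  forall i : 'I_n, exists p : 'I_m -> 'I_k,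
    forall j : 'I_k, recovery_set G i [set l | p l == j].

(* Batch array code: for every multiset {{i_1,..,i_k}} of [n] (given as a
   k-tuple idx), a partition R_1..R_k of [m] with R_j recovering x_{i_j}. *)
Definition is_batch_array_code (F : finFieldType) (n k m : nat) (Ns : 'I_m -> nat)
  (G : forall l : 'I_m, 'M[F]_(n, Ns l)) : Prop :=
  valid_sizes Ns /\
  forall idx : 'I_k -> 'I_n, exists p : 'I_m -> 'I_k,
    forall j : 'I_k, recovery_set G (idx j) [set l | p l == j].

From mathcomp Require Import all_boot all_order all_algebra all_field.
From mathcomp Require Import zify.
Set Implicit Arguments. Unset Strict Implicit. Unset Printing Implicit Defensive.
Import GRing.Theory Num.Theory.
Local Open Scope ring_scope.

(* Let w = m - k + 1. A cyclic window of w consecutive buckets leaves out only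
   k - 1 buckets, so for every i one of the k disjoint recovery sets of x_i
   lies inside the window; hence x is determined by the contents of the window
   and its buckets hold at least n symbols. Summing over the m windows counts
   every bucket w times: m n <= w N. *)

Lemma card_preim_ltn (N w : nat) (f : 'I_N -> 'I_N) :
  injective f -> (w <= N)%N -> #|[set x | (f x < w)%N]| = w.
Proof.
move=> injf leqwN.
have -> : [set x | (f x < w)%N] = f @^-1: [set d : 'I_N | (d < w)%N].
  by apply/setP => x; rewrite !inE.
have widen_inj : injective (widen_ord leqwN).
  by move=> d e /(congr1 val) /= /val_inj.
rewrite card_preimset // -[RHS](card_ord w) -(card_imset _ widen_inj).
apply: eq_card => d; rewrite inE; apply/idP/imsetP => [ltdw|[e _ ->]].
  by exists (Ordinal ltdw) => //; apply: val_inj.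
by rewrite /= ltn_ord.
Qed.

Lemma exists_notin_imset (T : finType) (k : nat) (p : T -> 'I_k) (A : {set T}) :
  (#|A| < k)%N -> exists j, j \notin p @: A.
Proof.
move=> ltAk; have := cardsC (p @: A); have := leq_imset_card p A.
rewrite card_ord => leApA cardpAC.
have /card_gt0P [j] : (0 < #|~: (p @: A)|)%N by lia.
by rewrite inE; exists j.
Qed.

Definition window (N : nat) (t : 'I_N.+1) (w : nat) : {set 'I_N.+1} :=
  [set l | ((l - t)%R < w)%N].

Lemma card_window (N w : nat) (t : 'I_N.+1) :
  (w <= N.+1)%N -> #|window t w| = w.
Proof. by apply: card_preim_ltn; apply: addIr. Qed.

Lemma sum_windows (N w : nat) (a : 'I_N.+1 -> nat) :
  (w <= N.+1)%N -> (\sum_t \sum_(l in window t w) a l = (\sum_l a l) * w)%N.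
Proof.
move=> leqwN; rewrite (exchange_big_dep xpredT) //= big_distrl /=.
apply: eq_bigr => l _.
rewrite -[in RHS](card_preim_ltn (subrI l) leqwN) mulnC -sum_nat_const.
by apply: eq_bigl => t; rewrite !inE.
Qed.

Section RecoveryCounting.

Variables (F : finFieldType) (n m : nat) (Ns : 'I_m -> nat).
Variable G : forall l : 'I_m, 'M[F]_(n, Ns l).

Definition recovers_all (W : {set 'I_m}) : Prop :=
  forall i : 'I_n, exists2 R : {set 'I_m}, R \subset W & recovery_set G i R.

Lemma recovers_all_injective (W : {set 'I_m}) (x y : 'rV[F]_n) :
  recovers_all W -> (forall l, l \in W -> x *m G l = y *m G l) -> x = y.
Proof.
move=> recW eqWxy; apply/rowP => i.
have [R sRW [f [a recR]]] := recW i.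
rewrite recR [RHS]recR; apply: eq_bigr => l Rl.
by rewrite eqWxy // (subsetP sRW).
Qed.

Lemma recovers_all_sum_ge (W : {set 'I_m}) :
  recovers_all W -> (n <= \sum_(l in W) Ns l)%N.
Proof.
move=> recW.
pose T := {u : {l in W} & 'I_(Ns (val u))}.
pose contents (x : 'rV[F]_n) : {ffun T -> F} :=
  [ffun u => (x *m G (val (tag u))) 0 (tagged u)].
have contents_inj : injective contents.
  move=> x y eqxy; apply: recovers_all_injective recW _ => l Wl.
  apply/rowP => c; pose u : T := Tagged _ (c : 'I_(Ns (val (Sub l Wl : {l in W})))).
  by have := congr1 (fun g : {ffun T -> F} => g u) eqxy; rewrite !ffunE.
rewrite big_sub /=.
have := leq_card contents contents_inj.
rewrite card_mx card_ffun mul1n leq_exp2l ?card_finNzRing_gt1 //.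
rewrite card_tagged sumnE big_map big_enum /=.
by under eq_bigr do rewrite card_ord.
Qed.

Lemma PIR_recovers_all (k : nat) (W : {set 'I_m}) :
  is_PIR_array_code k G -> (#|~: W| < k)%N -> recovers_all W.
Proof.
move=> [_ recP] ltWCk i; have [p recp] := recP i.
have [j notin_j] := exists_notin_imset p ltWCk.
exists [set l | p l == j]; last exact: recp.
apply/subsetP => l; rewrite inE => /eqP plj.
by apply: contraR notin_j => notWl; rewrite -plj imset_f // inE.
Qed.

Lemma batch_array_code_is_PIR (k : nat) :
  is_batch_array_code k G -> is_PIR_array_code k G.
Proof. by move=> [validNs recB]; split=> // i; apply: recB (fun=> i). Qed.

End RecoveryCounting.

Lemma PIR_total_size_ge (F : finFieldType) (n m k : nat)
  (Ns : 'I_m.+1 -> nat) (G : forall l : 'I_m.+1, 'M[F]_(n, Ns l)) :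
  (0 < k)%N -> (k <= m.+1)%N -> is_PIR_array_code k G ->
  (m.+1 * n <= total_size Ns * (m.+1 - k + 1))%N.
Proof.
move=> k_gt0 leqkm PIR; set w := (m.+1 - k + 1)%N.
have leqwm : (w <= m.+1)%N by rewrite /w; lia.
have window_sum_ge t : (n <= \sum_(l in window t w) Ns l)%N.
  apply: recovers_all_sum_ge; apply: (PIR_recovers_all PIR).
  by have := cardsC (window t w); rewrite card_window // card_ord /w; lia.
rewrite /total_size -sum_windows // -[X in (X * n)%N](card_ord m.+1).
by rewrite -sum_nat_const leq_sum.
Qed.

Theorem theorem3p1 (F : finFieldType) (n m k : nat) :
  (0 < n)%N -> (0 < m)%N -> (0 < k)%N -> (k <= m)%N ->
  (forall (Ns : 'I_m -> nat) (G : forall l : 'I_m, 'M[F]_(n, Ns l)),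
     is_PIR_array_code k G ->
     ((m * n)%:R / (m - k + 1)%:R : rat) <= (total_size Ns)%:R) /\
  (forall (Ns : 'I_m -> nat) (G : forall l : 'I_m, 'M[F]_(n, Ns l)),
     is_batch_array_code k G ->
     ((m * n)%:R / (m - k + 1)%:R : rat) <= (total_size Ns)%:R).
Proof.
move=> _ m_gt0 k_gt0; case: m m_gt0 => // m _ leqkm.
have PIR_bound Ns (G : forall l : 'I_m.+1, 'M[F]_(n, Ns l)) :
    is_PIR_array_code k G ->
    ((m.+1 * n)%:R / (m.+1 - k + 1)%:R : rat) <= (total_size Ns)%:R.
  move=> PIR; rewrite ler_pdivrMr; last by rewrite ltr0n addn1.
  by rewrite -natrM ler_nat; apply: PIR_total_size_ge PIR.
by split=> [|Ns G /batch_array_code_is_PIR]; apply: PIR_bound.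
Qed.
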